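(* Let $A$ be a Malcev algebra with Jacobian ideal $J$ and $J$-nucleus $N$, with $A=N\oplus J$ and $i:A/J\to N$ the induced isomorphism. If $\overline{\mathfrak{a}}$ and $\overline{\mathfrak{b}}$ are co-prime $i$-ideals of $N$, then their product $\overline{\mathfrak{a}}\overline{\mathfrak{b}}$ is an $i$-ideal of $N$.
   Context: A Malcev algebra $A$ over a field $k$ is a nonassociative $k$-algebra with bilinear product $[\cdot,\cdot]$ satisfying $[a,a]=0$ and $[J(a,b,c),a]=J(a,b,[a,c])$ for all $a,b,c\in A$, where $J(x,y,z)=[[x,y],z]+[[y,z],x]+[[z,x],y]$. $J=J(A,A,A)$ is the span of all Jacobians; the $J$-nucleus is $N=\{x\in A: J(x,A,A)=0\}$, a Lie algebra. When $A=N\oplus J$, $i:A/J\to N$ is the induced isomorphism. A subset $X$ of $N$ is an $i$-ideal of $N$ if $i(n)X\subseteq X$ for every $n\in A/J$ (products taken in $N$). Two $i$-ideals $\overline{\mathfrak{a}},\overline{\mathfrak{b}}$ are co-prime if $\overline{\mathfrak{a}}+\overline{\mathfrak{b}}=N$. The product $\overline{\mathfrak{a}}\overline{\mathfrak{b}}$ is the span of all $[x,y]$, $x\in\overline{\mathfrak{a}}$, $y\in\overline{\mathfrak{b}}$. *)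

From HB Require Import structures.
From mathcomp Require Import all_boot all_algebra.
Set Implicit Arguments. Unset Strict Implicit. Unset Printing Implicit Defensive.
Import GRing.Theory.
Local Open Scope ring_scope.

Section Malcev.
Variables (k : fieldType) (A : lmodType k).
Implicit Types (br : A -> A -> A) (S X Y N J : A -> Prop).

Definition bilinear_br br : Prop :=
  (forall (r : k) a b c, br (r *: a + b) c = r *: br a c + br b c) /\
  (forall (r : k) a b c, br a (r *: b + c) = r *: br a b + br a c).

Definition jacobian br x y z : A :=
  br (br x y) z + br (br y z) x + br (br z x) y.

Definition malcev br : Prop :=
  [/\ bilinear_br br,
      (forall a, br a a = 0) &
      (forall a b c, br (jacobian br a b c) a = jacobian br a b (br a c))].

Definition span S : A -> Prop := fun x =>
  exists (s : seq A) (c : seq k),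
    (forall i : 'I_(size s), S (nth 0 s i)) /\
    x = \sum_(i < size s) (nth 0 c i) *: (nth 0 s i).

Definition jacobian_ideal br : A -> Prop :=
  span (fun x => exists a b c, x = jacobian br a b c).

Definition J_nucleus br : A -> Prop :=
  fun x => forall y z, jacobian br x y z = 0.

Definition direct_sum N J : Prop :=
  (forall a, exists n j, [/\ N n, J j & a = n + j]) /\
  (forall x, N x -> J x -> x = 0).

(* X is an i-ideal of N: X ⊆ N and i(n) X ⊆ X for every n ∈ A/J.
   For the coset a + J, i(a + J) is the unique n ∈ N with a - n ∈ J. *)
Definition i_ideal br N J X : Prop :=
  (forall x, X x -> N x) /\
  (forall a n, N n -> J (a - n) -> forall x, X x -> X (br n x)).

Definition coprime_ideals N X Y : Prop :=
  forall z, N z <-> exists x y, [/\ X x, Y y & z = x + y].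

Definition ideal_prod br X Y : A -> Prop :=
  span (fun z => exists x y, [/\ X x, Y y & z = br x y]).

End Malcev.

(* Every n in N is i(n + J), so an i-ideal is stable under [n, -] for all n in N,
   i.e. it is an ideal of the Lie algebra N.  For n in N, J(n, x, z) = 0 is the
   Leibniz rule [n, [x, z]] = [[n, x], z] + [x, [n, z]] (using only [u, u] = 0),
   so the product of two such ideals is stable again; it lies in N because each
   [x, z] already lies in the ideal containing z, and N is a subspace. *)
From Pilot Require Import Defs.
From mathcomp Require Import all_boot all_algebra.
Set Implicit Arguments. Unset Strict Implicit. Unset Printing Implicit Defensive.
Import GRing.Theory.
Local Open Scope ring_scope.

Section Span.
Variables (k : fieldType) (A : lmodType k).
Implicit Types S P : A -> Prop.

Lemma span0 S : Defs.span S 0.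
Proof. by exists [::], [::]; split => [[]//|]; rewrite big_ord0. Qed.

Lemma span_cons S r g w : S g -> Defs.span S w -> Defs.span S (r *: g + w).
Proof.
move=> Sg [s [c [Ss ->]]]; exists (g :: s), (r :: c); split; last first.
  by rewrite big_ord_recl.
by case=> [[|i] //= lt_i_s]; apply: (Ss (Ordinal (lt_i_s : (i < size s)%N))).
Qed.

Lemma span_gen S g : S g -> Defs.span S g.
Proof. by move=> Sg; rewrite -[g]addr0 -[g]scale1r; apply/span_cons/span0. Qed.

Lemma span_ind S P :
  P 0 -> (forall r g y, S g -> P y -> P (r *: g + y)) ->
  forall x, Defs.span S x -> P x.
Proof.
move=> P0 Pcons x [s [c [Ss ->]]]; elim: s c Ss => [|g s IHs] c Ss.
  by rewrite big_ord0.
rewrite big_ord_recl; apply: Pcons; first exact: (Ss ord0).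
under eq_bigr do rewrite -nth_behead.
by apply: IHs => i; apply: (Ss (lift ord0 i)).
Qed.

Lemma span_lin S r u v : Defs.span S u -> Defs.span S v -> Defs.span S (r *: u + v).
Proof.
move=> Su Sv; elim/span_ind: u / Su r => [|r' g y Sg IHy] r.
  by rewrite scaler0 add0r.
by rewrite scalerDr scalerA -addrA; apply: span_cons.
Qed.

Lemma spanD S u v : Defs.span S u -> Defs.span S v -> Defs.span S (u + v).
Proof. by rewrite -{2}[u]scale1r; apply: span_lin. Qed.

Lemma span_min S P :
  P 0 -> (forall r u v, P u -> P v -> P (r *: u + v)) ->
  (forall g, S g -> P g) -> forall x, Defs.span S x -> P x.
Proof. by move=> P0 Plin SP; apply: span_ind => // r g y /SP; apply: Plin. Qed.

Lemma span_stable S (f : A -> A) :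
  (forall r u v, f (r *: u + v) = r *: f u + f v) ->
  (forall g, S g -> Defs.span S (f g)) ->
  forall x, Defs.span S x -> Defs.span S (f x).
Proof.
move=> f_lin fS; apply: span_ind => [|r g y Sg IHy].
  have f00 : f 0 = f 0 + f 0 by have := f_lin 1 0 0; rewrite !scale1r addr0.
  have -> : f 0 = 0 by apply: (@addrI _ (f 0)); rewrite addr0 -f00.
  exact: span0.
by rewrite f_lin; apply: span_lin; first exact: fS.
Qed.

End Span.

Lemma addrACA3 (V : nmodType) (x1 x2 x3 y1 y2 y3 : V) :
  x1 + y1 + (x2 + y2) + (x3 + y3) = x1 + x2 + x3 + (y1 + y2 + y3).
Proof. by rewrite (addrACA x1) (addrACA (x1 + x2)). Qed.

Section Bilinear.
Variables (k : fieldType) (A : lmodType k) (br : A -> A -> A).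
Hypothesis bil : bilinear_br br.

Lemma brDl x y z : br (x + y) z = br x z + br y z.
Proof. by have := (proj1 bil) 1 x y z; rewrite !scale1r. Qed.

Lemma brDr x y z : br z (x + y) = br z x + br z y.
Proof. by have := (proj2 bil) 1 z x y; rewrite !scale1r. Qed.

Lemma br0l z : br 0 z = 0.
Proof. by apply: (@addrI _ (br 0 z)); rewrite -brDl !addr0. Qed.

Lemma br0r z : br z 0 = 0.
Proof. by apply: (@addrI _ (br z 0)); rewrite -brDr !addr0. Qed.

Lemma brZl r x z : br (r *: x) z = r *: br x z.
Proof. by have := (proj1 bil) r x 0 z; rewrite !addr0 br0l addr0. Qed.

Lemma brZr r x z : br z (r *: x) = r *: br z x.
Proof. by have := (proj2 bil) r z x 0; rewrite !addr0 br0r addr0. Qed.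

Lemma brNl x z : br (- x) z = - br x z.
Proof. by rewrite -scaleN1r brZl scaleN1r. Qed.

Lemma br_skew : (forall x, br x x = 0) -> forall x y, br x y = - br y x.
Proof.
move=> alt x y; apply/eqP; rewrite -addr_eq0.
by have := alt (x + y); rewrite brDl !brDr !alt add0r addr0 => ->.
Qed.

Lemma jacobian0l y z : jacobian br 0 y z = 0.
Proof. by rewrite /jacobian !(br0l, br0r) !addr0. Qed.

Lemma jacobian_linl r x x' y z :
  jacobian br (r *: x + x') y z = r *: jacobian br x y z + jacobian br x' y z.
Proof.
by rewrite /jacobian !(brDl, brZl, brDr, brZr) !scalerDr addrACA3.
Qed.

Lemma J_nucleus0 : J_nucleus br 0.
Proof. exact: jacobian0l. Qed.

Lemma J_nucleus_lin r u v :
  J_nucleus br u -> J_nucleus br v -> J_nucleus br (r *: u + v).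
Proof. by move=> Nu Nv y z; rewrite jacobian_linl Nu Nv scaler0 addr0. Qed.

Lemma J_nucleus_Leibniz :
  (forall x, br x x = 0) -> forall n x z, J_nucleus br n ->
  br n (br x z) = br (br n x) z + br x (br n z).
Proof.
move=> alt n x z /(_ x z) jac_nxz.
rewrite (br_skew alt n (br x z)) (br_skew alt x (br n z)) (br_skew alt n z).
by apply/eqP; rewrite brNl opprK eq_sym -addr_eq0 addrAC; apply/eqP.
Qed.

End Bilinear.

Lemma i_ideal_br (k : fieldType) (A : lmodType k) (br : A -> A -> A)
    (X : A -> Prop) n x :
  i_ideal br (J_nucleus br) (jacobian_ideal br) X ->
  J_nucleus br n -> X x -> X (br n x).
Proof.
move=> [_ Xstable] Nn; apply: (Xstable n) => //.
by rewrite subrr; apply: span0.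
Qed.

Theorem lemma3p10 (k : fieldType) (A : lmodType k) (br : A -> A -> A)
  (a b : A -> Prop) :
  malcev br ->
  direct_sum (J_nucleus br) (jacobian_ideal br) ->
  i_ideal br (J_nucleus br) (jacobian_ideal br) a ->
  i_ideal br (J_nucleus br) (jacobian_ideal br) b ->
  coprime_ideals (J_nucleus br) a b ->
  i_ideal br (J_nucleus br) (jacobian_ideal br) (ideal_prod br a b).
Proof.
move=> [bil alt _] _ ideal_a ideal_b _.
have [aN _] := ideal_a; have [bN _] := ideal_b.
split.
  apply: span_min; [exact: J_nucleus0 | exact: J_nucleus_lin |].
  by move=> _ [x [z [ax bz ->]]]; apply/bN/(i_ideal_br ideal_b) => //; apply: aN.
move=> _ n Nn _; apply: (span_stable (fun r => proj2 bil r n)) => _ [x [z [ax bz ->]]].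
have nx_a : a (br n x) := i_ideal_br ideal_a Nn ax.
have nz_b : b (br n z) := i_ideal_br ideal_b Nn bz.
rewrite J_nucleus_Leibniz //.
by apply: spanD; apply: span_gen; [exists (br n x), z | exists x, (br n z)].
Qed.
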